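(* Let $q$ be a prime power and $n\ge k\ge 0$ integers. Let $V_1,\dots,V_\ell$ be subspaces of $\mathbb{F}_q^n$, each of dimension at most $k$. Suppose there exist integers $\delta_1,\dots,\delta_\ell\ge0$ such that $\dim\big(\bigcap_{i\in\Omega}V_i\big)\le k-\sum_{i\in\Omega}\delta_i$ for every nonempty $\Omega\subseteq[\ell]$. Then there exist subspaces $V_i'\supseteq V_i$ of $\mathbb{F}_q^n$ with $\dim V_i'=k-\delta_i$, $i=1,\dots,\ell$, such that $\dim\big(\bigcap_{i\in\Omega}V_i'\big)\le k-\sum_{i\in\Omega}\delta_i$ for every nonempty $\Omega\subseteq[\ell]$. *)

From mathcomp Require Import all_boot all_order all_algebra all_field.

(* It suffices to
   enlarge by one vector a single V j with dim (V j) + delta j < k while keeping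
   admissibility, and to iterate. Dimensions of intersections are supermodular in
   Om and the sums of the delta i are modular, so tight sets containing j are
   closed under intersection. The smallest one, Om0, gives a subspace
   X = V j + \bigcap_(i in Om0 :\ j) V i of dimension < k that contains
   V j + \bigcap_(i in Om :\ j) V i for every tight Om containing j. Adding to V j
   any vector outside X leaves the intersection over a tight Om unchanged, and
   raises the one over any other Om by at most one. *)

From mathcomp Require Import all_boot all_order all_algebra all_field.
From mathcomp Require Import zify.
Import GRing.Theory Num.Theory.
Local Open Scope ring_scope.

Section VectorDimension.
Context {F : fieldType} {vT : vectType F}.
Implicit Types (U W : {vspace vT}) (v : vT).

Lemma dimv_add_line U v : v \notin U -> \dim (U + <[v]>) = (\dim U).+1.
Proof.
move=> vNU; have v_neq0 : v != 0 by apply: contraNneq vNU => ->; rewrite mem0v.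
have : (\dim (U :&: <[v]>) < \dim <[v]>)%N.
  by rewrite (ltn_leqif (dimv_leqif_sup (capvSr U _))) subv_cap subvv andbT -memvE.
rewrite dim_vline v_neq0 ltnS leqn0 => /eqP cap0.
by have := dimv_sum_cap U <[v]>; rewrite cap0 dim_vline v_neq0 addn0 addn1.
Qed.

Lemma dimv_cap_add_line U W v :
  (\dim ((U + <[v]>) :&: W) <= (\dim (U :&: W)).+1)%N.
Proof.
have := dimv_sum_cap (U + <[v]>) W; have := dimv_sum_cap U W.
have : (\dim (U + <[v]>) <= \dim U + 1)%N.
  by rewrite (leq_trans (dimv_add_leqif U _)) // leq_add2l dim_vline leq_b1.
have : (\dim (U + W) <= \dim (U + <[v]> + W))%N.
  by rewrite dimvS // addvS ?addvSl.
lia.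
Qed.

Lemma capv_add_line_sub {U W v} :
  v \notin (U + W)%VS -> ((U + <[v]>) :&: W <= U :&: W)%VS.
Proof.
move=> vNUW; rewrite subv_cap capvSr andbT; apply/subvP => w.
case/memv_capP=> /memv_addP [u uU [_ /vlineP [c ->] ->]] wW.
have [->|c_neq0] := eqVneq c 0; first by rewrite scale0r addr0.
case/negP: vNUW; rewrite -[v](scalerK c_neq0) -[c *: v](addKr u) scalerDr.
by rewrite memv_add ?memvZ ?memvN.
Qed.

Lemma dimv_bigcap_supermodular {I : finType} (V : I -> {vspace vT}) (A B : {set I}) :
  (\dim (\bigcap_(i in A) V i) + \dim (\bigcap_(i in B) V i)
    <= \dim (\bigcap_(i in A :&: B) V i) + \dim (\bigcap_(i in A :|: B) V i))%N.
Proof.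
rewrite -dimv_sum_cap (big_setU _ _ _ (@capvv _ _)) leq_add2r dimvS //.
by rewrite subv_add; apply/andP; split; apply/subv_bigcapP => i /setIP [iA iB];
  apply: bigcapv_inf (subvv _).
Qed.

End VectorDimension.

Lemma big_setUI {R : Type} {idx : R} (op : Monoid.com_law idx) {I : finType}
    (A B : {set I}) (G : I -> R) :
  op (\big[op/idx]_(i in A :|: B) G i) (\big[op/idx]_(i in A :&: B) G i)
  = op (\big[op/idx]_(i in A) G i) (\big[op/idx]_(i in B) G i).
Proof.
rewrite (@big_setID _ _ _ _ (A :|: B) A) setUK setDUl setDv set0U.
rewrite (@big_setID _ _ _ _ B A) setIC.
by rewrite Monoid.mulmAC -Monoid.mulmA.
Qed.

Section AdmissibleCompletion.
Context {F : fieldType} {vT : vectType F} {I : finType} {k : nat} {delta : I -> nat}.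
Implicit Types (V : I -> {vspace vT}) (Om : {set I}).

Definition admissible V := forall Om, Om != set0 ->
  (\dim (\bigcap_(i in Om) V i) + \sum_(i in Om) delta i <= k)%N.

Definition tight V Om :=
  (\dim (\bigcap_(i in Om) V i) + \sum_(i in Om) delta i == k)%N.

Lemma admissible1 V j : admissible V -> (\dim (V j) + delta j <= k)%N.
Proof.
by move=> admV; have := admV [set j]; rewrite -card_gt0 cards1 !big_set1; apply.
Qed.

Lemma tightI V Om1 Om2 : admissible V -> Om1 :&: Om2 != set0 ->
  tight V Om1 -> tight V Om2 -> tight V (Om1 :&: Om2).
Proof.
move=> admV Om12_neq0 /eqP tight1 /eqP tight2.
have Om12U_neq0 : Om1 :|: Om2 != set0.
  exact: subset_neq0 (subset_trans (subsetIl _ _) (subsetUl _ _)) Om12_neq0.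
have := admV _ Om12_neq0; have := admV _ Om12U_neq0.
have := dimv_bigcap_supermodular V Om1 Om2.
have /= := big_setUI addn Om1 Om2 delta.
by move=> *; apply/eqP; lia.
Qed.

Lemma minimal_tight V j : admissible V -> (exists Om, (j \in Om) && tight V Om) ->
  exists2 Om0 : {set I}, (j \in Om0) && tight V Om0 &
    forall Om, j \in Om -> tight V Om -> Om0 \subset Om.
Proof.
move=> admV [Om1 tight_Om1].
have [Om0 tight_Om0 min_Om0] :=
  @arg_minnP _ _ (fun Om => (j \in Om) && tight V Om) (fun Om => #|Om|) tight_Om1.
exists Om0 => // Om jOm tight_Om; case/andP: tight_Om0 => jOm0 tight_Om0.
have jOm0I : j \in Om0 :&: Om by rewrite inE jOm0.
apply/setIidPl/eqP; rewrite eqEcard subsetIl min_Om0 // jOm0I tightI //.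
by apply/set0Pn; exists j.
Qed.

Lemma dim_tight_hull V j Om : admissible V -> (\dim (V j) + delta j < k)%N ->
  j \in Om -> tight V Om -> (\dim (V j + \bigcap_(i in Om :\ j) V i) < k)%N.
Proof.
move=> admV Vj_lt jOm /eqP; rewrite (big_setD1 j jOm) (big_setD1 j jOm) /=.
have [->|Omj_neq0] := eqVneq (Om :\ j) set0.
  by rewrite !big_set0 capvf addn0 => Vj_eq; rewrite Vj_eq ltnn in Vj_lt.
have := admV _ Omj_neq0; have := dimv_sum_cap (V j) (\bigcap_(i in Om :\ j) V i).
lia.
Qed.

Lemma tight_hull V j : admissible V -> (\dim (V j) + delta j < k)%N ->
  exists X : {vspace vT}, [/\ (V j <= X)%VS, (\dim X < k)%N &
    forall Om, j \in Om -> tight V Om -> (V j + \bigcap_(i in Om :\ j) V i <= X)%VS].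
Proof.
move=> admV Vj_lt.
case: (boolP [exists Om : {set I}, (j \in Om) && tight V Om]).
  case/existsP/(minimal_tight V j admV) => Om0 /andP [jOm0 tight_Om0] min_Om0.
  exists (V j + \bigcap_(i in Om0 :\ j) V i)%VS; split.
  - exact: addvSl.
  - exact: dim_tight_hull.
  - move=> Om jOm tight_Om; rewrite addvS //.
    apply/subv_bigcapP => i /setD1P [i_neq_j iOm0].
    apply: bigcapv_inf (subvv _).
    by rewrite !inE i_neq_j (subsetP (min_Om0 _ jOm tight_Om)).
move/existsPn=> no_tight; exists (V j); split => //.
  exact: leq_ltn_trans (leq_addr _ _) Vj_lt.
by move=> Om jOm tight_Om; have := no_tight Om; rewrite jOm tight_Om.
Qed.

Lemma admissible_add_line V j v : admissible V ->
    (forall Om, j \in Om -> tight V Om ->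
       v \notin (V j + \bigcap_(i in Om :\ j) V i)%VS) ->
  admissible [eta V with j |-> (V j + <[v]>)%VS].
Proof.
move=> admV v_avoids Om Om_neq0; have := admV Om Om_neq0.
have [jOm|jNOm] := boolP (j \in Om); last first.
  suff -> : (\bigcap_(i in Om) [eta V with j |-> (V j + <[v]>)%VS] i
    = \bigcap_(i in Om) V i)%VS by [].
  apply: eq_bigr => i iOm /=.
  by case: eqP iOm => // ->; rewrite (negbTE jNOm).
have capE : (\bigcap_(i in Om) [eta V with j |-> (V j + <[v]>)%VS] i
    = (V j + <[v]>) :&: \bigcap_(i in Om :\ j) V i)%VS.
  rewrite (big_setD1 j jOm) /= eqxx; congr (_ :&: _)%VS.
  by apply: eq_bigr => i /setD1P [/negbTE i_neq_j _] /=; rewrite i_neq_j.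
rewrite capE (big_setD1 j jOm) /=.
have [tight_Om|loose_Om] := boolP (tight V Om).
  have := dimvS (capv_add_line_sub (v_avoids _ jOm tight_Om)); lia.
move: loose_Om; rewrite /tight (big_setD1 j jOm) /=.
have := dimv_cap_add_line (V j) (\bigcap_(i in Om :\ j) V i) v; lia.
Qed.

Hypothesis k_le_dim : (k <= \dim {:vT})%N.

Lemma admissible_grow V j : admissible V -> (\dim (V j) + delta j < k)%N ->
  exists V1 : I -> {vspace vT}, [/\ admissible V1, forall i, (V i <= V1 i)%VS
    & forall i, \dim (V1 i) = (\dim (V i) + (i == j))%N].
Proof.
move=> admV Vj_lt; have [X [VjX dimX hullX]] := tight_hull V j admV Vj_lt.
have [v _ vNX] : exists2 v, v \in fullv & v \notin X.
  by apply/subvPn/negP => /dimvS; lia.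
have vNVj : v \notin V j by apply: contra vNX; apply: (subvP VjX).
exists [eta V with j |-> (V j + <[v]>)%VS]; split.
- apply: admissible_add_line => // Om jOm tight_Om.
  by apply: contra vNX; apply: (subvP (hullX _ jOm tight_Om)).
- by move=> i /=; case: eqP => [->|_]; [exact: addvSl | exact: subvv].
- by move=> i /=; case: eqP => [->|_]; rewrite ?dimv_add_line ?addn1 ?addn0.
Qed.

Lemma admissible_completion V : admissible V ->
  exists V' : I -> {vspace vT}, [/\ forall i, (V i <= V' i)%VS,
    forall i, (\dim (V' i) + delta i)%N = k & admissible V'].
Proof.
have [N] := ubnP (\sum_i (k - (\dim (V i) + delta i)))%N.
elim: N V => // N IH V deficit_lt admV.
case: (boolP [forall i, \dim (V i) + delta i == k]%N) => [/forallP full | ].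
  by exists V; split => // i; apply/eqP.
case/forallPn => j /negP Vj_neq; have Vj_lt : (\dim (V j) + delta j < k)%N.
  by rewrite ltn_neqAle admissible1 // andbT; apply/negP.
have [V1 [admV1 sub1 dim1]] := admissible_grow V j admV Vj_lt.
have [|V' [sub' dim' admV']] := IH V1 _ admV1.
  rewrite -ltnS (leq_trans _ deficit_lt) // ltnS.
  rewrite [X in (X < _)%N](bigD1 j) // [X in (_ < X)%N](bigD1 j) //= dim1 eqxx.
  rewrite (eq_bigr (fun i => k - (\dim (V i) + delta i)))%N; first lia.
  by move=> i /negbTE i_neq_j; rewrite dim1 i_neq_j addn0.
by exists V'; split => // i; apply: subv_trans (sub1 i) (sub' i).
Qed.

End AdmissibleCompletion.

Arguments admissible {F vT I} k delta V.

Theorem mainTheorem12 (F : finFieldType) (n k l : nat) (hkn : (k <= n)%N)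
  (V : 'I_l -> {vspace 'rV[F]_n})
  (hV : forall i, (\dim (V i) <= k)%N)
  (delta : 'I_l -> nat)
  (hdelta : forall Om : {set 'I_l}, Om != set0 ->
     ((\dim (\bigcap_(i in Om) V i)%VS)%:Z <= k%:Z - (\sum_(i in Om) delta i)%:Z)) :
  exists V' : 'I_l -> {vspace 'rV[F]_n},
    [/\ forall i, (V i <= V' i)%VS,
        forall i, (\dim (V' i))%:Z = k%:Z - (delta i)%:Z
      & forall Om : {set 'I_l}, Om != set0 ->
     ((\dim (\bigcap_(i in Om) V' i)%VS)%:Z <= k%:Z - (\sum_(i in Om) delta i)%:Z)].
Proof.
(* [hV] is the singleton case of [hdelta]. *)
have int_bound (a c : nat) : (a%:Z <= k%:Z - c%:Z) = (a + c <= k)%N.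
  by rewrite lerBrDr -PoszD lez_nat.
have k_le_dim : (k <= \dim {:'rV[F]_n})%N by rewrite dimvf dim_matrix mul1r.
have admV : admissible k delta V by move=> Om /hdelta; rewrite int_bound.
have [V' [subV' dimV' admV']] := admissible_completion k_le_dim V admV.
exists V'; split => // [i | Om /admV']; last by rewrite int_bound.
by rewrite -(dimV' i) PoszD addrK.
Qed.
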